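(* Let $d>0$, $N\ge1$, let $\mathcal{S}$ be the 4-PAM constellation labeled by any Gray labeling, let $\boldsymbol{x},\hat{\boldsymbol{x}}\in\mathcal{S}^N$ be distinct, and let $\boldsymbol{h}=[h[1],\dots,h[N]]\in\mathbb{R}^N$ be any channel realization with $h[k]\neq0$ for some $k$ with $x[k]\neq\hat{x}[k]$. Then the asymptotic loss satisfies $\mathsf{L}(\boldsymbol{h},\boldsymbol{x},\hat{\boldsymbol{x}})\le 1.25$ dB.
   Context: $\mathcal{S}=\{s_1,s_2,s_3,s_4\}$ with $s_1=-3d$, $s_2=-d$, $s_3=d$, $s_4=3d$; the Gray labelings (bijections $\{0,1\}^2\to\mathcal{S}$ given by $\boldsymbol{q}=[q_1,\dots,q_4]$, $q_i$ the integer value of the label of $s_i$, most significant bit first) are $[0,1,3,2]$, $[0,2,3,1]$, $[1,0,2,3]$, $[2,0,1,3]$. The flat fading channel is $Y[k]=h[k]x[k]+Z[k]$ with known real coefficients $h[k]$. For each $k$ with $x[k]\neq\hat{x}[k]$: $\mu^{\mathcal{X}}_k=\sigma^{2,\mathcal{X}}_k=(x[k]-\hat{x}[k])^2/(4d^2)$; $\mu^{\mathcal{B}}_k=\sigma^{2,\mathcal{B}}_k=(x[k]-\hat{x}[k])^2/(4d^2)$ except that if $\{x[k],\hat{x}[k]\}=\{s_1,s_4\}$ then $\mu^{\mathcal{B}}_k=3$, $\sigma^{2,\mathcal{B}}_k=1$. Summing over $k$ with $x[k]\neq\hat{x}[k]$, the normalized distances are $a^{\mathcal{X}}(\boldsymbol{h},\boldsymbol{x},\hat{\boldsymbol{x}})=\sum_k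 h[k]^2\mu^{\mathcal{X}}_k/\sqrt{\sum_k h[k]^2\sigma^{2,\mathcal{X}}_k}$ (symbol-wise ML decoder) and $a^{\mathcal{B}}(\boldsymbol{h},\boldsymbol{x},\hat{\boldsymbol{x}})=\sum_k h[k]^2\mu^{\mathcal{B}}_k/\sqrt{\sum_k h[k]^2\sigma^{2,\mathcal{B}}_k}$ (bit-wise max-log decoder under the zero-crossing approximation), and the asymptotic loss is $\mathsf{L}(\boldsymbol{h},\boldsymbol{x},\hat{\boldsymbol{x}})=20\log_{10}\big(a^{\mathcal{X}}(\boldsymbol{h},\boldsymbol{x},\hat{\boldsymbol{x}})/a^{\mathcal{B}}(\boldsymbol{h},\boldsymbol{x},\hat{\boldsymbol{x}})\big)$ dB. *)

From Stdlib Require Import Reals List.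
Import ListNotations.
Open Scope R_scope.

Inductive sym : Set := S1 | S2 | S3 | S4.

Definition sym_eq_dec (a b : sym) : {a = b} + {a <> b}.
Proof. decide equality. Defined.

Definition sym_val (d : R) (s : sym) : R :=
  match s with S1 => -3 * d | S2 => - d | S3 => d | S4 => 3 * d end.

(* A labeling q = [q1;q2;q3;q4]: q_i is the integer value of the 2-bit label
   of s_i (MSB first). The Gray labelings of 4-PAM: *)
Definition gray_labelings : list (list nat) :=
  [[0;1;3;2]%nat; [0;2;3;1]%nat; [1;0;2;3]%nat; [2;0;1;3]%nat].

Fixpoint sumN (n : nat) (f : nat -> R) : R :=
  match n with O => 0 | S m => sumN m f + f m end.

Definition outer_pair (a b : sym) : bool :=
  match a, b with S1, S4 | S4, S1 => true | _, _ => false end.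

(* Per-coordinate quantities (used only when a <> b). *)
Definition muX (d : R) (a b : sym) : R := (sym_val d a - sym_val d b) ^ 2 / (4 * d ^ 2).
Definition sigma2X (d : R) (a b : sym) : R := (sym_val d a - sym_val d b) ^ 2 / (4 * d ^ 2).
Definition muB (d : R) (a b : sym) : R :=
  if outer_pair a b then 3 else (sym_val d a - sym_val d b) ^ 2 / (4 * d ^ 2).
Definition sigma2B (d : R) (a b : sym) : R :=
  if outer_pair a b then 1 else (sym_val d a - sym_val d b) ^ 2 / (4 * d ^ 2).

Definition wsum (N : nat) (h : nat -> R) (x xh : nat -> sym)
  (g : sym -> sym -> R) : R :=
  sumN N (fun k => if sym_eq_dec (x k) (xh k) then 0 else h k ^ 2 * g (x k) (xh k)).

Definition aX (d : R) (N : nat) (h : nat -> R) (x xh : nat -> sym) : R :=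
  wsum N h x xh (muX d) / sqrt (wsum N h x xh (sigma2X d)).
Definition aB (d : R) (N : nat) (h : nat -> R) (x xh : nat -> sym) : R :=
  wsum N h x xh (muB d) / sqrt (wsum N h x xh (sigma2B d)).

Definition log10 (r : R) : R := ln r / ln 10.

Definition loss (d : R) (N : nat) (h : nat -> R) (x xh : nat -> sym) : R :=
  20 * log10 (aX d N h x xh / aB d N h x xh).

(* On a coordinate where {x[k], x^[k]} = {s1, s4} the symbol-wise metrics are
   mu = sigma^2 = 9, while the bit-wise ones are mu = 3, sigma^2 = 1; on every
   other differing coordinate all four agree.  Collecting the weights h[k]^2,
   with A the total over the other coordinates and B the total over the outer
   pairs, the ratio of normalized distances is
   sqrt((A + 9B)(A + B)) / (A + 3B), whose square is at most 4/3 because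
   4(A + 3B)^2 - 3(A + 9B)(A + B) = (A - 3B)^2.  Finally 10 log10(4/3) <= 1.25
   since (4/3)^8 = 65536/6561 < 10. *)
From Stdlib Require Import Reals List Lra Lia.
Open Scope R_scope.

Lemma sumN_ext (n : nat) (f g : nat -> R) :
  (forall k, f k = g k) -> sumN n f = sumN n g.
Proof. intros Hfg; induction n; simpl; [reflexivity|]. now rewrite IHn, Hfg. Qed.

Lemma sumN_add_scale (n : nat) (f g : nat -> R) (c : R) :
  sumN n (fun k => f k + c * g k) = sumN n f + c * sumN n g.
Proof. induction n; simpl; [ring|]. rewrite IHn. ring. Qed.

Lemma sumN_nonneg (n : nat) (f : nat -> R) :
  (forall k, 0 <= f k) -> 0 <= sumN n f.
Proof. intros Hf; induction n; simpl; [lra|]. specialize (Hf n). lra. Qed.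

Lemma sumN_ge_term (n : nat) (f : nat -> R) (k : nat) :
  (forall i, 0 <= f i) -> (k < n)%nat -> f k <= sumN n f.
Proof.
  intros Hf Hk; induction n as [|n IHn]; [lia|]; simpl.
  destruct (Nat.eq_dec k n) as [->|Hne].
  - pose proof (sumN_nonneg n f Hf). lra.
  - assert (f k <= sumN n f) by (apply IHn; lia). pose proof (Hf n). lra.
Qed.

Section WeightedSum.

Variables (N : nat) (h : nat -> R) (x xh : nat -> sym).

Lemma wsum_add_scale (g u v : sym -> sym -> R) (c : R) :
  (forall a b, g a b = u a b + c * v a b) ->
  wsum N h x xh g = wsum N h x xh u + c * wsum N h x xh v.
Proof.
  intros Hg. unfold wsum. rewrite <- sumN_add_scale. apply sumN_ext. intro k.
  destruct (sym_eq_dec (x k) (xh k)); [ring|]. rewrite Hg. ring.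
Qed.

Lemma wsum_nonneg (g : sym -> sym -> R) :
  (forall a b, 0 <= g a b) -> 0 <= wsum N h x xh g.
Proof.
  intros Hg. apply sumN_nonneg. intro k.
  destruct (sym_eq_dec (x k) (xh k)); [lra|].
  apply Rmult_le_pos; [apply pow2_ge_0 | apply Hg].
Qed.

Lemma wsum_pos (g : sym -> sym -> R) :
  (forall a b, 0 <= g a b) -> (forall a b, a <> b -> 0 < g a b) ->
  (exists k, (k < N)%nat /\ x k <> xh k /\ h k <> 0) ->
  0 < wsum N h x xh g.
Proof.
  intros Hg Hgpos [k [Hk [Hxk Hhk]]].
  set (f := fun k => if sym_eq_dec (x k) (xh k) then 0
                     else h k ^ 2 * g (x k) (xh k)).
  assert (Hf : forall i, 0 <= f i).
  { intro i. unfold f. destruct (sym_eq_dec (x i) (xh i)); [lra|].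
    apply Rmult_le_pos; [apply pow2_ge_0 | apply Hg]. }
  assert (Hfk : 0 < f k).
  { unfold f. destruct (sym_eq_dec (x k) (xh k)) as [|_]; [contradiction|].
    apply Rmult_lt_0_compat; [rewrite <- Rsqr_pow2; now apply Rsqr_pos_lt | now apply Hgpos]. }
  pose proof (sumN_ge_term N f k Hf Hk). unfold wsum. fold f. lra.
Qed.

End WeightedSum.

Section PairMetrics.

Variables (d : R).
Hypothesis d_neq0 : d <> 0.

Definition inner_dist (a b : sym) : R :=
  if outer_pair a b then 0 else muX d a b.

Definition outer_ind (a b : sym) : R := if outer_pair a b then 1 else 0.

Lemma four_dsq_pos : 0 < 4 * d ^ 2.
Proof. rewrite <- Rsqr_pow2. pose proof (Rsqr_pos_lt d d_neq0). lra. Qed.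

Lemma inner_dist_nonneg (a b : sym) : 0 <= inner_dist a b.
Proof.
  unfold inner_dist, muX. destruct (outer_pair a b); [lra|].
  apply Rmult_le_pos; [apply pow2_ge_0 | left; apply Rinv_0_lt_compat, four_dsq_pos].
Qed.

Lemma outer_ind_nonneg (a b : sym) : 0 <= outer_ind a b.
Proof. unfold outer_ind. destruct (outer_pair a b); lra. Qed.

Lemma muX_split (a b : sym) : muX d a b = inner_dist a b + 9 * outer_ind a b.
Proof.
  unfold inner_dist, outer_ind, muX.
  destruct a, b; simpl; field; exact d_neq0.
Qed.

Lemma muB_split (a b : sym) : muB d a b = inner_dist a b + 3 * outer_ind a b.
Proof. unfold muB, inner_dist, outer_ind, muX. destruct (outer_pair a b); ring. Qed.

Lemma sigma2B_split (a b : sym) : sigma2B d a b = inner_dist a b + 1 * outer_ind a b.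
Proof. unfold sigma2B, inner_dist, outer_ind, muX. destruct (outer_pair a b); ring. Qed.

Lemma sigma2B_nonneg (a b : sym) : 0 <= sigma2B d a b.
Proof.
  rewrite sigma2B_split. pose proof (inner_dist_nonneg a b).
  pose proof (outer_ind_nonneg a b). lra.
Qed.

Lemma sigma2B_pos (a b : sym) : a <> b -> 0 < sigma2B d a b.
Proof.
  intros Hab. pose proof four_dsq_pos.
  unfold sigma2B. destruct a, b; simpl; try congruence; try lra;
    apply Rdiv_lt_0_compat; nra.
Qed.

End PairMetrics.

Lemma gray_ratio_sq_le (A B : R) : 0 <= A -> 0 <= B ->
  3 * ((A + 9 * B) * (A + 1 * B)) <= 4 * (A + 3 * B) ^ 2.
Proof. intros HA HB. pose proof (pow2_ge_0 (A - 3 * B)). nra. Qed.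

Lemma div_sqrt_self (s : R) : 0 < s -> s / sqrt s = sqrt s.
Proof.
  intros Hs. pose proof (sqrt_lt_R0 s Hs).
  rewrite <- (sqrt_sqrt s) at 1 by lra. field. lra.
Qed.

Lemma dB_le_of_sq_le (r : R) : 0 < r -> r ^ 2 <= 4 / 3 -> 20 * log10 r <= 5 / 4.
Proof.
  intros Hr Hr2.
  assert (Hr16 : r ^ 16 <= 10).
  { replace (r ^ 16) with ((r ^ 2) ^ 8) by (rewrite <- pow_mult; reflexivity).
    apply Rle_trans with ((4 / 3) ^ 8); [|lra].
    apply pow_incr. split; [apply pow2_ge_0 | exact Hr2]. }
  assert (Hln : 16 * ln r <= ln 10).
  { replace 16 with (INR 16) by (simpl; ring). rewrite <- ln_pow by exact Hr.
    destruct Hr16 as [Hlt | ->]; [|lra].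
    left. apply ln_increasing; [apply pow_lt |]; assumption. }
  assert (Hln10 : 0 < ln 10) by (rewrite <- ln_1; apply ln_increasing; lra).
  unfold log10. apply Rmult_le_reg_r with (ln 10); [exact Hln10|].
  field_simplify; lra.
Qed.

Lemma dB_ratio_le (s t u : R) : 0 < s -> 0 < t -> 0 < u ->
  3 * (s * t) <= 4 * u ^ 2 -> 20 * log10 ((s / sqrt s) / (u / sqrt t)) <= 5 / 4.
Proof.
  intros Hs Ht Hu Hstu. rewrite div_sqrt_self by exact Hs.
  pose proof (sqrt_lt_R0 s Hs) as Hss. pose proof (sqrt_lt_R0 t Ht) as Hst.
  apply dB_le_of_sq_le.
  - apply Rdiv_lt_0_compat; [exact Hss | apply Rdiv_lt_0_compat; assumption].
  - replace ((sqrt s / (u / sqrt t)) ^ 2) with ((sqrt s * sqrt s) * (sqrt t * sqrt t) / u ^ 2)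
      by (field; lra).
    rewrite !sqrt_sqrt by lra.
    apply Rmult_le_reg_r with (u ^ 2); [apply pow_lt; exact Hu|].
    field_simplify; lra.
Qed.

Theorem theorem5 (d : R) (N : nat) (q : list nat)
  (x xh : nat -> sym) (h : nat -> R) :
  0 < d -> (1 <= N)%nat -> In q gray_labelings ->
  (exists k, (k < N)%nat /\ x k <> xh k) ->
  (exists k, (k < N)%nat /\ x k <> xh k /\ h k <> 0) ->
  loss d N h x xh <= 5 / 4.
Proof.
  (* The metrics do not depend on the labeling, so the Gray hypothesis is unused;
     nonemptiness is implied by the last hypothesis. *)
  intros Hd _ _ _ Hk.
  assert (d_neq0 : d <> 0) by lra.
  set (A := wsum N h x xh (inner_dist d)). set (B := wsum N h x xh outer_ind).
  assert (HA : 0 <= A) by (apply wsum_nonneg; exact (inner_dist_nonneg d d_neq0)).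
  assert (HB : 0 <= B) by (apply wsum_nonneg; exact outer_ind_nonneg).
  assert (HmuX : wsum N h x xh (muX d) = A + 9 * B)
    by (apply wsum_add_scale; exact (muX_split d d_neq0)).
  assert (HmuB : wsum N h x xh (muB d) = A + 3 * B)
    by (apply wsum_add_scale; exact (muB_split d)).
  assert (Hsigma2B : wsum N h x xh (sigma2B d) = A + 1 * B)
    by (apply wsum_add_scale; exact (sigma2B_split d)).
  assert (HAB : 0 < A + 1 * B).
  { rewrite <- Hsigma2B.
    apply wsum_pos; [exact (sigma2B_nonneg d d_neq0) | exact (sigma2B_pos d d_neq0) | exact Hk]. }
  unfold loss, aX, aB. change (sigma2X d) with (muX d).
  rewrite HmuX, HmuB, Hsigma2B.
  apply dB_ratio_le; try lra. apply gray_ratio_sq_le; assumption.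
Qed.
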